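(* Let $J\subseteq[n]$. If $\pi,\hat\pi\in S_J$ are joined by an edge of the bridge polytope $\mathrm{Br}_J$, then there exists a transposition $(i\,\ell)$ such that $\hat\pi=(i\,\ell)\pi$.
   Context: For $J\subseteq[n]$, $S_J=\{\pi\in S_n:\ \pi(j)\ge j \text{ for } j\in J,\ \pi(j)\le j \text{ for } j\notin J\}$ and $\mathrm{Br}_J=\operatorname{conv}\{(\pi(1),\dots,\pi(n)):\pi\in S_J\}\subset\mathbb{R}^n$, each $\pi\in S_J$ being identified with the vertex $(\pi(1),\dots,\pi(n))$. For a transposition $(i\,\ell)$, $(i\,\ell)\pi$ denotes $(i\,\ell)\circ\pi$, the permutation obtained from $\pi$ by swapping the values $i$ and $\ell$. *)

From HB Require Import structures.
From mathcomp Require Import all_boot all_order all_algebra all_fingroup.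
Set Implicit Arguments. Unset Strict Implicit. Unset Printing Implicit Defensive.
Import Order.TTheory GRing.Theory Num.Theory.
Local Open Scope ring_scope.

(* [n] is modelled by 'I_n, i.e. {0,..,n-1}; the paper's index j corresponds
   to the ordinal j-1.  Permutations of [n] are 'S_n. *)

Definition SJ (n : nat) (J : {set 'I_n}) : {set 'S_n} :=
  [set p : 'S_n | [forall j : 'I_n,
      if j \in J then (j <= p j)%N else (p j <= j)%N]].

(* the vertex (pi(1),...,pi(n)) in R^n (1-based values) *)
Definition pvec (R : realFieldType) (n : nat) (p : 'S_n) : 'rV[R]_n :=
  \row_(j < n) ((p j).+1)%:R.

Definition in_conv (R : realFieldType) (n : nat) (S : {set 'S_n})
    (x : 'rV[R]_n) : Prop :=
  exists w : 'S_n -> R,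
    (forall p, 0 <= w p) /\ \sum_(p in S) w p = 1 /\
    x = \sum_(p in S) w p *: pvec R p.

Definition in_Br (R : realFieldType) (n : nat) (J : {set 'I_n}) (x : 'rV[R]_n)
  : Prop := in_conv (SJ J) x.

Definition in_segment (R : realFieldType) (n : nat) (a b x : 'rV[R]_n) : Prop :=
  exists t : R, 0 <= t /\ t <= 1 /\ x = (1 - t) *: a + t *: b.

Definition dotr (R : realFieldType) (n : nat) (c x : 'rV[R]_n) : R :=
  \sum_(i < n) c 0 i * x 0 i.

(* pi and pihat (distinct vertices) are joined by an edge of Br_J: the segment
   [pi, pihat] is a face of Br_J, i.e. it is the intersection of Br_J with a
   supporting hyperplane { c.x = m } (with c.x <= m on Br_J). *)
Definition Br_edge (R : realFieldType) (n : nat) (J : {set 'I_n}) (p q : 'S_n)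
  : Prop :=
  p \in SJ J /\ q \in SJ J /\ p != q /\
  exists (c : 'rV[R]_n) (m : R),
    (forall x, in_Br J x -> dotr c x <= m) /\
    (forall x, (in_Br J x /\ dotr c x = m) <-> in_segment (pvec R p) (pvec R q) x).

From HB Require Import structures.
From mathcomp Require Import all_boot all_order all_algebra all_fingroup.
From mathcomp Require Import zify ring.
Set Implicit Arguments. Unset Strict Implicit. Unset Printing Implicit Defensive.
Import Order.TTheory GRing.Theory Num.Theory.

(* Two distinct permutations P, Q in S_J always "cross" at some positions a, b
   (P a < P b but Q a > Q b) in such a way that exchanging the entries at a and
   b keeps both P and Q in S_J.  If c.x <= m is a supporting inequality of Br_J
   that is tight exactly on the edge [P, Q], the swapped copies of P and Q give
   c_a <= c_b and c_a >= c_b, so the swap of P lies on the edge too; a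
   permutation vector on the segment [P, Q] that differs from P only at a and b
   forces Q to be that swap.
   The crossing pair is found in a window [lo, hi) of values occupying the same
   positions under P and Q.  If some position admits every value of the window,
   either a pigeonhole count produces the pair or that position splits the
   window in two; otherwise all positions are forced into the window and its
   bottom value is fixed by both P and Q, so the window shrinks. *)

Lemma count_iota_range a b m :
  count (fun i => (a <= i < b)%N) (iota 0 m) = minn b m - a.
Proof.
elim: m => [|m IH]; first by rewrite /= minn0.
rewrite -addn1 iotaD count_cat IH /= add0n.
case: (ltnP m b) => hmb; case: (leqP a m) => ham; lia.
Qed.

Lemma card_ord_range n a b :
  (b <= n)%N -> #|[set i : 'I_n | (a <= i < b)%N]| = b - a.
Proof.
move=> hb; rewrite cardsE cardE size_filter -enumT.
rewrite -(count_map val (fun i => (a <= i < b)%N)) val_enum_ord.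
by rewrite count_iota_range (minn_idPl hb).
Qed.

Lemma card_perm_range n (P : 'S_n) a b :
  (b <= n)%N -> #|[set j | (a <= P j < b)%N]| = b - a.
Proof.
move=> hb; rewrite -(card_ord_range a hb) -[RHS](card_preimset _ (@perm_inj _ P)).
by apply: eq_card => j; rewrite !inE.
Qed.

Section Crossings.
Variables (n : nat) (J : {set 'I_n}).

Definition allowed (j v : 'I_n) : bool :=
  if j \in J then (j <= v)%N else (v <= j)%N.

Definition admissible (P : 'S_n) := forall j, allowed j (P j).

Definition crossing (P Q : 'S_n) (a b : 'I_n) :=
  [/\ (P a < P b)%N, (Q b < Q a)%N &
      [&& allowed a (P b), allowed a (Q b), allowed b (P a) & allowed b (Q a)]].

Definition window_stable (P Q : 'S_n) (lo hi : nat) :=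
  forall j, (lo <= P j < hi)%N = (lo <= Q j < hi)%N.

Definition allows_window (lo hi : nat) (j : 'I_n) :=
  if j \in J then (j <= lo)%N else (hi <= j.+1)%N.

Lemma SJP P : reflect (admissible P) (P \in SJ J).
Proof. by rewrite inE; apply: (iffP forallP). Qed.

Lemma allowed_between j v w (u : 'I_n) :
  allowed j v -> allowed j w -> (v <= u <= w)%N -> allowed j u.
Proof. by rewrite /allowed; case: (j \in J) => ? ? /andP[? ?]; lia. Qed.

Lemma allows_windowP lo hi j (v : 'I_n) :
  allows_window lo hi j -> (lo <= v < hi)%N -> allowed j v.
Proof. by rewrite /allows_window /allowed; case: (j \in J) => ? /andP[? ?]; lia. Qed.

Lemma allowed_or_between j v w (x y : 'I_n) :
  allowed j v -> allowed j w -> (x < v)%N -> (w < y)%N ->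
  allowed j x && allowed j y || (x < j < y)%N.
Proof. by rewrite /allowed; case: (j \in J) => ? ? ? ?; lia. Qed.

Lemma crossing_sym P Q a b : crossing Q P a b -> crossing P Q b a.
Proof. by case=> ? ? /and4P[? ? ? ?]; split => //; apply/and4P. Qed.

Lemma crossing_neq P Q a b : crossing P Q a b -> a != b.
Proof. by case=> hab _ _; apply: contraTneq hab => ->; rewrite ltnn. Qed.

Lemma card_crossing_candidates P Q lo hi u :
  window_stable P Q lo hi -> (hi <= n)%N -> (lo <= P u < hi)%N -> (P u < Q u)%N ->
  (Q u - P u <= #|[set b | (P u < P b < hi) && (lo <= Q b < Q u)]|)%N.
Proof.
move=> st hn lou ltu.
set SE := [set b | _].
have hQu : (Q u < hi)%N by have := st u; rewrite lou; lia.
set A := [set b | (lo <= Q b < Q u)%N].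
set B := [set b | (lo <= P b < (P u).+1)%N].
have cA : #|A| = Q u - lo by rewrite card_perm_range //; lia.
have cB : #|B| = (P u).+1 - lo by rewrite card_perm_range.
have uB : u \in B by rewrite inE; lia.
have subA : A \subset SE :|: (B :\ u).
  apply/subsetP => b; rewrite !inE => /andP[lb yb].
  have Wb : (lo <= P b < hi)%N by rewrite st; lia.
  have bu : b != u by apply: contraTneq yb => ->; rewrite ltnn.
  rewrite bu /=; lia.
have := subset_leq_card subA; have := (leq_card_setU SE (B :\ u)).1.
have := cardsD1 u B; rewrite uB; lia.
Qed.

Lemma crossing_lt P Q lo hi u :
  admissible P -> admissible Q -> window_stable P Q lo hi -> (hi <= n)%N ->
  (lo <= P u < hi)%N -> allows_window lo hi u -> (P u < Q u)%N ->
  exists a b, crossing P Q a b.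
Proof.
move=> AP AQ st hn Wu Vu ltu.
set SE := [set b | (P u < P b < hi) && (lo <= Q b < Q u)].
have [[b /andP[bSE /andP[bx by_]]] | none] :=
  altP (@existsP _ (fun b => (b \in SE) && (allowed b (P u) && allowed b (Q u)))).
  move: bSE; rewrite inE => /andP[/andP[xb bhi] /andP[lob ybu]].
  have QuW : (lo <= Q u < hi)%N by rewrite -st.
  exists u, b; split => //; apply/and4P; split => //; apply: (allows_windowP Vu); lia.
have sub : SE \subset [set b : 'I_n | ((P u).+1 <= b < Q u)%N].
  apply/subsetP => b bSE; rewrite inE.
  have nb : ~~ (allowed b (P u) && allowed b (Q u)).
    by move: none; rewrite negb_exists => /forallP/(_ b); rewrite bSE.
  move: bSE; rewrite inE => /andP[/andP[xb _] /andP[_ yb]].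
  by have := allowed_or_between (AP b) (AQ b) xb yb; rewrite (negbTE nb).
have := subset_leq_card sub; rewrite card_ord_range; last exact: ltnW.
by have := card_crossing_candidates st hn Wu ltu; rewrite -/SE; lia.
Qed.

Lemma crossing_or_split P Q lo hi u :
  admissible P -> admissible Q -> window_stable P Q lo hi ->
  (lo <= P u < hi)%N -> allows_window lo hi u -> P u = Q u ->
  (exists a b, crossing P Q a b) \/
  forall j, (lo <= P j < hi)%N ->
    (P j < P u)%N = (Q j < P u)%N /\ (P u < P j)%N = (P u < Q j)%N.
Proof.
move=> AP AQ st Wu Vu eu.
have allowed_u j : (lo <= P j < hi)%N -> allowed u (P j) && allowed u (Q j).
  by move=> Wj; rewrite !(allows_windowP Vu) // -st.
have [[b /andP[Wb between]] | none] := altP (@existsP _ (fun b =>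
    (lo <= P b < hi)%N && ((P b < P u < Q b) || (Q b < P u < P b))%N)).
  left; have /andP[ub1 ub2] := allowed_u b Wb.
  case/orP: between => /andP[h1 h2].
    have bu : allowed b (P u).
      by apply: (allowed_between (AP b) (AQ b)); rewrite (ltnW h1) (ltnW h2).
    by exists b, u; split; rewrite -?eu //; apply/and4P; split; rewrite -?eu.
  have bu : allowed b (P u).
    by apply: (allowed_between (AQ b) (AP b)); rewrite (ltnW h1) (ltnW h2).
  by exists u, b; split; rewrite -?eu //; apply/and4P; split; rewrite -?eu.
right=> j Wj; case: (eqVneq j u) => [->|ju]; first by rewrite -eu.
have nP : (P j != P u :> nat) by rewrite (inj_eq val_inj) (inj_eq perm_inj).
have nQ : (Q j != P u :> nat) by rewrite eu (inj_eq val_inj) (inj_eq perm_inj).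
move: none; rewrite negb_exists => /forallP/(_ j); rewrite Wj /=.
by move: nP nQ; lia.
Qed.

Lemma window_stable_split P Q lo hi x :
  window_stable P Q lo hi -> (lo <= x < hi)%N ->
  (forall j, (lo <= P j < hi)%N ->
    (P j < x)%N = (Q j < x)%N /\ (x < P j)%N = (x < Q j)%N) ->
  window_stable P Q lo x /\ window_stable P Q x.+1 hi.
Proof.
move=> st Wx sides; split=> j; have := st j;
  have [Wj|Wj] := boolP (lo <= P j < hi)%N; try have [] := sides j Wj; lia.
Qed.

Lemma window_bottom_fixed P Q lo hi :
  admissible P -> admissible Q -> window_stable P Q lo hi -> (lo < hi <= n)%N ->
  (forall u, (lo <= P u < hi)%N -> ~~ allows_window lo hi u) ->
  exists j0, P j0 = lo :> nat /\ Q j0 = lo :> nat.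
Proof.
move=> AP AQ st hlo uncov.
have sub : [set j | (lo <= P j < hi)%N] \subset [set j : 'I_n | (lo <= j < hi)%N].
  apply/subsetP => j; rewrite !inE => Wj; have := uncov j Wj; have := AP j.
  by rewrite /allows_window /allowed; case: (j \in J); lia.
have eqW : [set j | (lo <= P j < hi)%N] = [set j : 'I_n | (lo <= j < hi)%N].
  by apply/eqP; rewrite eqEcard sub card_perm_range ?card_ord_range //; lia.
have lon : (lo < n)%N by lia.
have : Ordinal lon \in [set j | (lo <= P j < hi)%N] by rewrite eqW inE /=; lia.
rewrite inE => Wj0; have QWj0 : (lo <= Q (Ordinal lon) < hi)%N by rewrite -st.
exists (Ordinal lon); have := uncov _ Wj0.
have := AP (Ordinal lon); have := AQ (Ordinal lon).
by rewrite /allows_window /allowed; case: (_ \in J) => /=; lia.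
Qed.

Lemma window_stable_shrink P Q lo hi j0 :
  window_stable P Q lo hi -> P j0 = lo :> nat -> Q j0 = lo :> nat ->
  window_stable P Q lo.+1 hi.
Proof.
move=> st P0 Q0 j; have := st j.
case: (eqVneq j j0) => [->|ne]; first by rewrite P0 Q0 ltnn.
have nP : (P j != P j0 :> nat) by rewrite (inj_eq val_inj) (inj_eq perm_inj).
have nQ : (Q j != Q j0 :> nat) by rewrite (inj_eq val_inj) (inj_eq perm_inj).
by move: nP nQ; rewrite P0 Q0; lia.
Qed.

Lemma crossing_in_window P Q lo hi :
  admissible P -> admissible Q -> (hi <= n)%N -> window_stable P Q lo hi ->
  (exists2 d, (lo <= P d < hi)%N & P d != Q d :> nat) ->
  exists a b, crossing P Q a b.
Proof.
move=> AP AQ; have [k] := ubnP (hi - lo); elim: k lo hi => // k IH lo hi.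
rewrite ltnS => hk hn st [d Wd dd].
have [[u /andP[Wu Vu]] | uncov] := altP (@existsP _ (fun u =>
  (lo <= P u < hi)%N && allows_window lo hi u)).
  case: (ltngtP (P u) (Q u)) => cu.
  - exact: crossing_lt AP AQ st hn Wu Vu cu.
  - have stQ : window_stable Q P lo hi by move=> j; rewrite st.
    have WQu : (lo <= Q u < hi)%N by rewrite -st.
    have [a [b /crossing_sym cr]] := crossing_lt AQ AP stQ hn WQu Vu cu.
    by exists b, a.
  - have [//|sides] := crossing_or_split AP AQ st Wu Vu (val_inj cu).
    have [stl stu] := window_stable_split st Wu sides.
    have [h1 h2] := sides d Wd.
    case: (ltngtP (P d) (P u)) => cd.
    + by apply: (IH lo (P u)) => //; [lia | lia | exists d => //; lia].
    + by apply: (IH (P u).+1 hi) => //; [lia | exists d => //; lia].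
    + by move: dd; lia.
have [j0 [P0 Q0]] : exists j0, P j0 = lo :> nat /\ Q j0 = lo :> nat.
  apply: window_bottom_fixed AP AQ st _ _; first lia.
  by move=> u Wu; apply: contra uncov => Vu; apply/existsP; exists u; rewrite Wu.
apply: (IH lo.+1 hi) => //; first lia.
  exact: window_stable_shrink st P0 Q0.
exists d => //; suff : P d != lo :> nat by move: Wd; lia.
apply: contra dd => /eqP Pd.
have -> : d = j0 by apply: (@perm_inj _ P); apply: val_inj; rewrite /= Pd P0.
by rewrite P0 Q0.
Qed.

Lemma crossing_exists P Q :
  admissible P -> admissible Q -> P != Q -> exists a b, crossing P Q a b.
Proof.
move=> AP AQ PQ; apply: (crossing_in_window (lo := 0) AP AQ (leqnn n)).
  by move=> j; rewrite !ltn_ord.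
have /existsP[d dd] : [exists d, P d != Q d].
  apply: contraR PQ; rewrite negb_exists => /forallP h.
  by apply/eqP/permP => d; apply/eqP/negPn/h.
by exists d; rewrite ?ltn_ord // (inj_eq val_inj).
Qed.

Lemma SJ_tperm r a b :
  r \in SJ J -> allowed a (r b) -> allowed b (r a) -> (tperm a b * r)%g \in SJ J.
Proof.
move=> /SJP rS ra rb; apply/SJP => j; rewrite permM.
by case: tpermP => [->|->|_ _].
Qed.

End Crossings.

Lemma perm_tperm_of_agree_off (T : finType) (p q : {perm T}) (a b : T) :
  a != b -> q != p -> (forall j, j != a -> j != b -> q j = p j) ->
  q = (tperm a b * p)%g.
Proof.
move=> ab qp off.
have image x : x \in [:: a; b] -> q x = p a \/ q x = p b.
  move=> hx; have pk : p (p^-1 (q x))%g = q x by rewrite permKV.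
  case: (eqVneq (p^-1 (q x))%g a) => [<-|ka]; first by left.
  case: (eqVneq (p^-1 (q x))%g b) => [<-|kb]; first by right.
  move: hx; rewrite -(perm_inj (etrans (off _ ka kb) pk)).
  by rewrite !inE (negbTE ka) (negbTE kb).
have qab : q a != q b by rewrite (inj_eq perm_inj).
have [[qa | qa] [qb | qb]] := (image a (mem_head _ _), image b (mem_last _ [:: b])).
- by move: qab; rewrite qa qb eqxx.
- case/eqP: qp; apply/permP => j.
  by case: (eqVneq j a) => [->|ja] //; case: (eqVneq j b) => [->|jb]; [|exact: off].
- apply/permP => j; rewrite permM.
  by case: tpermP => [->|->|ja jb] //; apply: off; apply/eqP.
- by move: qab; rewrite qa qb eqxx.
Qed.

Section BridgeVertices.
Variables (R : realFieldType) (n : nat) (J : {set 'I_n}).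
Local Open Scope ring_scope.

Lemma pvec_inj : injective (@pvec R n).
Proof.
move=> p q /rowP h; apply/permP => j; apply: val_inj.
by have := h j; rewrite !mxE => /eqP; rewrite eqr_nat eqSS => /eqP.
Qed.

Lemma dotr_pvec_tperm (c : 'rV[R]_n) (p : 'S_n) (a b : 'I_n) : a != b ->
  dotr c (pvec R (tperm a b * p)%g) =
  dotr c (pvec R p) + (c 0 a - c 0 b) * ((p b).+1%:R - (p a).+1%:R).
Proof.
move=> ab; apply/eqP; rewrite addrC -subr_eq; apply/eqP.
rewrite /dotr -sumrB (bigD1 a) //= (bigD1 b) /=; last by rewrite eq_sym.
rewrite big1 => [|i /andP[ia ib]]; last first.
  by rewrite !mxE permM tpermD 1?eq_sym // -mulrBr subrr mulr0.
by rewrite !mxE !permM tpermL tpermR; ring.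
Qed.

Lemma in_segment_l (x y : 'rV[R]_n) : in_segment x y x.
Proof. by exists 0; rewrite lexx ler01 subr0 scale1r scale0r addr0. Qed.

Lemma in_segment_r (x y : 'rV[R]_n) : in_segment x y y.
Proof. by exists 1; rewrite lexx ler01 subrr scale0r add0r scale1r. Qed.

Lemma in_segment_pvec_agree (p q r : 'S_n) :
  in_segment (pvec R p) (pvec R q) (pvec R r) -> r != p ->
  forall j, r j = p j -> q j = p j.
Proof.
case=> t [_ [_ ht]] rp j rpj.
have t0 : t != 0.
  apply: contra rp => /eqP t0; apply/eqP/pvec_inj.
  by rewrite ht t0 subr0 scale1r scale0r addr0.
have := congr1 (fun M : 'rV[R]_n => M 0 j) ht; rewrite !mxE rpj.
set P := (p j).+1%:R; set Q := (q j).+1%:R => e.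
have : t * (Q - P) = (1 - t) * P + t * Q - P by ring.
rewrite -e subrr => /eqP; rewrite mulf_eq0 (negbTE t0) subr_eq0 eqr_nat eqSS => /eqP.
exact: val_inj.
Qed.

Lemma in_Br_pvec (r : 'S_n) : r \in SJ J -> in_Br J (pvec R r).
Proof.
move=> rS; exists (fun s => (s == r)%:R); split=> [s|]; first exact: ler0n.
split; rewrite (bigD1 r) //= eqxx big1 ?addr0 ?scale1r // => s /andP[_ /negbTE ->] //.
by rewrite scale0r.
Qed.

Lemma dotr_tperm_face c m (p q : 'S_n) a b :
  (forall x, in_Br J x -> dotr c x <= m) ->
  p \in SJ J -> q \in SJ J -> dotr c (pvec R p) = m -> dotr c (pvec R q) = m ->
  crossing J p q a b -> dotr c (pvec R (tperm a b * p)%g) = m.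
Proof.
move=> supp pS qS dp dq cr; have [ltp ltq /and4P[apb aqb bpa bqa]] := cr.
have ab := crossing_neq cr.
have le_p := supp _ (in_Br_pvec (SJ_tperm pS apb bpa)).
have le_q := supp _ (in_Br_pvec (SJ_tperm qS aqb bqa)).
rewrite dotr_pvec_tperm // dp gerDl in le_p.
rewrite dotr_pvec_tperm // dq gerDl in le_q.
rewrite dotr_pvec_tperm // dp.
suff -> : c 0 a = c 0 b by rewrite subrr mul0r addr0.
have up : 0 < (p b).+1%:R - (p a).+1%:R :> R by rewrite subr_gt0 ltr_nat ltnS.
have down : (q b).+1%:R - (q a).+1%:R < 0 :> R by rewrite subr_lt0 ltr_nat ltnS.
rewrite (pmulr_lle0 _ up) in le_p; rewrite (nmulr_lle0 _ down) in le_q.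
by apply/eqP; rewrite -subr_eq0 eq_le le_p le_q.
Qed.

End BridgeVertices.

Theorem lemma4p4 (R : realFieldType) (n : nat) (J : {set 'I_n}) (p q : 'S_n) :
  Br_edge R J p q ->
  exists i l : 'I_n, i != l /\ q = (p * tperm i l)%g.
Proof.
case=> pS [qS [pq [c [m [supp face]]]]].
have [AP AQ] : admissible J p /\ admissible J q by split; apply/SJP.
have [a [b cr]] := crossing_exists AP AQ pq.
have ab := crossing_neq cr.
have [_ dp] := (face _).2 (in_segment_l (pvec R p) (pvec R q)).
have [_ dq] := (face _).2 (in_segment_r (pvec R p) (pvec R q)).
have [_ _ /and4P[apb _ bpa _]] := cr.
have rS := SJ_tperm pS apb bpa.
have seg := (face _).1 (conj (in_Br_pvec R rS) (dotr_tperm_face supp pS qS dp dq cr)).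
have rp : (tperm a b * p)%g != p.
  apply/eqP => /permP/(_ a); rewrite permM tpermL => /perm_inj/eqP.
  by rewrite eq_sym (negbTE ab).
have -> : q = (tperm a b * p)%g.
  apply: perm_tperm_of_agree_off ab _ _; first by rewrite eq_sym.
  by move=> j ja jb; apply: (in_segment_pvec_agree seg rp); rewrite permM tpermD // eq_sym.
exists (p a), (p b); split; first by rewrite (inj_eq perm_inj).
by rewrite -tpermJ conjgE !mulgA mulgV mul1g.
Qed.
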